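(* Let $I=(G,T,k)$, $G=(V,E)$, be a Node Multiway Cut instance satisfying: (R1) no two terminals are adjacent and $p(I)\ge 0$; (R2) no vertex of $V\setminus T$ is adjacent to two distinct terminals; (R3) for every terminal $t$ and every neighbour $w\in V\setminus T$ of $t$, the optimum of the LP-relaxation of $I$ with the additional constraint $d_w=0$ is strictly larger than $LP(I)$; (R5) every connected component of $G$ contains at least two terminals. Then $|T|\le 2k$.
   Context: A Node Multiway Cut instance $I=(G,T,k)$ consists of a simple undirected graph $G=(V,E)$, a set $T\subseteq V$ of terminals and an integer $k$; it is a YES-instance iff there is a set $X\subseteq V\setminus T$ with $|X|\le k$ such that every path in $G$ between two distinct terminals contains a vertex of $X$. Let $\mathcal P(I)$ be the set of all simple paths in $G$ connecting two distinct terminals. The LP-relaxation of $I$ is: minimize $\sum_{v\in V\setminus T} d_v$ subject to $\sum_{v\in V(P)\setminus T} d_v\ge 1$ for every $P\in\mathcal P(I)$ and $d_v\ge 0$ for all $v\in V\setminus T$. $LP(I)$ denotes its optimum value and $p(I)=k-LP(I)$. *)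

From HB Require Import structures.
From mathcomp Require Import all_boot all_order all_algebra.
Set Implicit Arguments. Unset Strict Implicit. Unset Printing Implicit Defensive.
Import Order.TTheory GRing.Theory Num.Theory.
Local Open Scope ring_scope.

Definition simple_graph (V : finType) (e : rel V) : Prop :=
  symmetric e /\ irreflexive e.

Definition term_path (V : finType) (e : rel V) (T : {set V}) (x : V) (s : seq V) : bool :=
  [&& path e x s, uniq (x :: s), x \in T, last x s \in T & x != last x s].

Definition lp_obj (V : finType) (T : {set V}) (d : V -> rat) : rat :=
  \sum_(v in ~: T) d v.

(* Feasibility for the LP relaxation, with the additional constraints
   d_v = 0 for v in Z (Z = set0 gives the plain relaxation). Values of d on
   terminals are irrelevant (not variables of the LP). *)
Definition lp_feasible (V : finType) (e : rel V) (T Z : {set V}) (d : V -> rat) : Prop :=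
  (forall v, v \notin T -> 0 <= d v) /\
  (forall v, v \notin T -> v \in Z -> d v = 0) /\
  (forall x s, term_path e T x s -> 1 <= \sum_(v <- x :: s | v \notin T) d v).

Definition lp_optimum (V : finType) (e : rel V) (T Z : {set V}) (x : rat) : Prop :=
  (exists d, lp_feasible e T Z d /\ lp_obj T d = x) /\
  (forall d, lp_feasible e T Z d -> x <= lp_obj T d).

From HB Require Import structures.
From mathcomp Require Import all_boot all_order all_algebra.
From mathcomp Require Import lra.
Set Implicit Arguments. Unset Strict Implicit. Unset Printing Implicit Defensive.
Import Order.TTheory GRing.Theory Num.Theory.
Local Open Scope ring_scope.

(* Let N be the boundary of T, i.e. the non-terminals adjacent to a terminal,
   and d an optimal solution of the LP relaxation, of value LP <= k.
   - Combinatorics: by (R5) every terminal has a neighbour, which lies in N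
     by (R1); by (R2) distinct terminals have distinct neighbours, so
     |T| <= |N|.
   - Positivity: by (R3), d > 0 on N, since otherwise d would also be optimal
     for the LP with the extra constraint d_w = 0.
   - Perturbation: let m > 0 be the minimum of d on N.  A terminal path through
     three vertices of N has length >= 1 + m, because re-routing it through a
     terminal adjacent to the middle one gives a terminal path missing one of
     the other two.  Hence lowering d by a small eps on N and rescaling by
     1 / (1 - 2 eps) stays feasible; optimality of LP then gives
     |N| <= 2 LP.
   Chaining, |T| <= |N| <= 2 LP <= 2k. *)

Section SplitCount.
Variables (A : eqType) (P : pred A).

Lemma split_count (s : seq A) (n : nat) : (n < count P s)%N ->
  exists s1 w s2, [/\ s = s1 ++ w :: s2, P w & (n <= count P s2)%N].
Proof.
elim: s => [|y s IH] //=; case Py: (P y) => /= Hn.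
  by exists [::], y, s; split => //; rewrite -ltnS -add1n.
have [s1 [w [s2 [-> Pw Hs2]]]] := IH Hn.
by exists (y :: s1), w, s2.
Qed.

Lemma split_middle (s : seq A) : (2 < count P s)%N ->
  exists s1 w s2, [/\ s = s1 ++ w :: s2, has P s1, P w & has P s2].
Proof.
case/split_count => s1 [a [s' [-> Pa /split_count [s1' [w [s2 [-> Pw Hs2]]]]]]].
exists (s1 ++ a :: s1'), w, s2; rewrite -catA has_cat /= Pa orbT.
by split => //; rewrite has_count.
Qed.

End SplitCount.

(* Re-routing a terminal path x :: s1 ++ w :: s2 through a terminal u
   adjacent to its inner vertex w. *)
Section Rerouting.
Variables (V : finType) (e : rel V) (T : {set V}).
Variables (x w u : V) (s1 s2 : seq V).
Hypotheses (Hxs : term_path e T x (s1 ++ w :: s2)) (uT : u \in T) (ewu : e w u).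

Lemma term_path_halves :
  [/\ path e x s1, e (last x s1) w, path e w s2, uniq (x :: s1) & uniq (w :: s2)].
Proof.
case/and5P: Hxs; rewrite cat_path -cat_cons cat_uniq => /andP[P1 /andP[ew P2]].
by case/and3P.
Qed.

Lemma term_path_disjoint {v} : v \in x :: s1 -> v \notin w :: s2.
Proof.
case/and5P: Hxs => _; rewrite -cat_cons cat_uniq => /and3P[_ /hasPn disj _] _ _ _.
by apply: contraL => /disj.
Qed.

Lemma term_path_shortcut : symmetric e -> u \in x :: s1 -> term_path e T u (w :: s2).
Proof.
move=> Hsym ux; have [_ _ P2 _ U2] := term_path_halves.
have uw2 := term_path_disjoint ux; have /and5P[_ _ _ lT _] := Hxs.
apply/and5P; split => //=; first by rewrite Hsym ewu.
- by rewrite uw2.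
- by move: lT; rewrite last_cat.
- by apply: contraNneq uw2 => ->; exact: mem_last.
Qed.

Lemma term_path_extend : w \notin T -> u \notin x :: s1 ->
  term_path e T x (s1 ++ [:: w; u]).
Proof.
move=> wT ux; have [P1 ew _ U1 _] := term_path_halves.
have /and5P[_ _ xT _ _] := Hxs.
have wx : w \notin x :: s1 by apply: contraL (mem_head w s2) => /term_path_disjoint.
apply/and5P; split => //.
- by rewrite cat_path P1 /= ew ewu.
- rewrite -cat_cons cat_uniq U1 /= inE negb_or wx orbF andbT /=.
  by apply/andP; split => //; rewrite inE; apply: contraNneq wT => ->.
- by rewrite last_cat.
- by rewrite last_cat /=; apply: contraNneq ux => ->; exact: mem_head.
Qed.

End Rerouting.

Section LPLength.
Variables (V : finType) (e : rel V) (T : {set V}) (d : V -> rat).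
Hypothesis d_ge0 : forall v, v \notin T -> 0 <= d v.

Lemma vertex_le_length (s : seq V) a : a \in s -> a \notin T ->
  d a <= \sum_(v <- s | v \notin T) d v.
Proof.
elim: s => // y s IH; rewrite inE big_cons => /predU1P[-> aT | ? aT].
  by rewrite aT lerDl sumr_ge0.
by case: ifP => yT; rewrite ?ler_wpDl ?d_ge0 ?IH ?yT.
Qed.

(* Detour bound: if a feasible d gives length >= 1 to every terminal path, a
   terminal path with non-terminals a before and b after a vertex w adjacent
   to a terminal u has length >= 1 + min (d a) (d b): re-routing through u
   gives a terminal path that misses a or b. *)
Lemma detour_bound x s1 w s2 a b u m :
  symmetric e ->
  (forall x s, term_path e T x s -> 1 <= \sum_(v <- x :: s | v \notin T) d v) ->
  term_path e T x (s1 ++ w :: s2) -> w \notin T -> u \in T -> e w u ->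
  a \in s1 -> a \notin T -> m <= d a -> b \in s2 -> b \notin T -> m <= d b ->
  1 + m <= \sum_(v <- x :: s1 ++ w :: s2 | v \notin T) d v.
Proof.
move=> Hsym Hlen Hxs wT uT ewu aS aT ma bS bT mb.
rewrite -cat_cons big_cat /=.
have [ux | ux] := boolP (u \in x :: s1).
  have Hw : 1 <= \sum_(v <- w :: s2 | v \notin T) d v.
    by have := Hlen _ _ (term_path_shortcut Hxs uT ewu Hsym ux); rewrite big_cons uT.
  have a1 : m <= \sum_(v <- x :: s1 | v \notin T) d v.
    by apply: le_trans ma (vertex_le_length _ _); rewrite ?inE ?aS ?orbT.
  by rewrite addrC lerD.
have Hx : 1 <= \sum_(v <- x :: s1 | v \notin T) d v + d w.
  have := Hlen _ _ (term_path_extend Hxs uT ewu wT ux).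
  by rewrite -cat_cons big_cat /= [X in _ + X]big_cons wT [X in d w + X]big_cons uT big_nil addr0.
have b2 := le_trans mb (vertex_le_length bS bT).
by rewrite [X in _ <= _ + X]big_cons wT addrA lerD.
Qed.

End LPLength.

Definition boundary (V : finType) (e : rel V) (T : {set V}) : {set V} :=
  [set v | (v \notin T) && [exists t in T, e v t]].

Lemma boundaryP (V : finType) (e : rel V) (T : {set V}) v :
  reflect (v \notin T /\ exists2 t, t \in T & e v t) (v \in boundary e T).
Proof.
rewrite inE; apply: (iffP andP) => [[vT /existsP[t /andP[]]] | [vT [t tT evt]]].
  by split => //; exists t.
by split => //; apply/existsP; exists t; rewrite tT.
Qed.

Lemma long_boundary_path (V : finType) (e : rel V) (T : {set V}) (d : V -> rat) m x s :
  symmetric e -> (forall v, v \notin T -> 0 <= d v) ->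
  (forall x s, term_path e T x s -> 1 <= \sum_(v <- x :: s | v \notin T) d v) ->
  (forall v, v \in boundary e T -> m <= d v) ->
  term_path e T x s -> (2 < count (mem (boundary e T)) s)%N ->
  1 + m <= \sum_(v <- x :: s | v \notin T) d v.
Proof.
move=> Hsym d_ge0 Hlen mN Hxs /split_middle[s1 [w [s2 [Es]]]].
move=> /hasP[a aS aN] wN /hasP[b bS bN].
have /boundaryP[wT [u uT ewu]] := wN.
have /boundaryP[aT _] := aN; have /boundaryP[bT _] := bN.
rewrite Es in Hxs *.
exact: (detour_bound d_ge0 Hsym Hlen Hxs wT uT ewu aS aT (mN a aN) bS bT (mN b bN)).
Qed.

Section Perturbation.
Variables (V : finType) (e : rel V) (T N : {set V}).
Hypothesis NT : forall v, v \in N -> v \notin T.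

Definition perturb (eps : rat) (d : V -> rat) (v : V) : rat :=
  (d v - (v \in N)%:R * eps) / (1 - 2 * eps).

Lemma sum_indicator (p : seq V) :
  \sum_(v <- p | v \notin T) ((v \in N)%:R : rat) = (count (mem N) p)%:R.
Proof.
elim: p => [|y p IH]; first by rewrite big_nil.
rewrite big_cons /= IH natrD; case: ifP => yT; case: (boolP (y \in N)) => yN //=.
- by rewrite NT in yT.
- by rewrite add0r.
Qed.

Lemma perturb_length eps d (p : seq V) :
  \sum_(v <- p | v \notin T) perturb eps d v =
  (\sum_(v <- p | v \notin T) d v - (count (mem N) p)%:R * eps) / (1 - 2 * eps).
Proof. by rewrite -mulr_suml sumrB -mulr_suml sum_indicator. Qed.

Lemma perturb_obj eps d :
  lp_obj T (perturb eps d) = (lp_obj T d - #|N|%:R * eps) / (1 - 2 * eps).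
Proof.
rewrite /lp_obj /perturb -mulr_suml sumrB -mulr_suml; congr ((_ - _ * _) / _).
rewrite -sumr_const big_mkcond [RHS]big_mkcond /=; apply: eq_bigr => v _.
by rewrite in_setC; case vN: (v \in N); rewrite ?(negbTE (NT vN)) //; case: (v \in T).
Qed.

(* If d >= m on N and every terminal path through three vertices of N has
   length >= 1 + m, then a small enough perturbation stays feasible: paths
   through at most two vertices of N lose at most 2 eps, the others at most
   eps * |V| <= m. *)
Lemma perturb_feasible d m eps :
  lp_feasible e T set0 d -> (forall v, v \in N -> m <= d v) ->
  (forall x s, term_path e T x s -> (2 < count (mem N) s)%N ->
     1 + m <= \sum_(v <- x :: s | v \notin T) d v) ->
  0 <= eps -> eps <= m -> eps * #|V|%:R <= m -> 2 * eps < 1 ->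
  lp_feasible e T set0 (perturb eps d).
Proof.
move=> [d_ge0 [_ Hlen]] mN Hlong eps_ge0 eps_m epsV eps2.
have c_gt0 : 0 < 1 - 2 * eps by rewrite subr_gt0.
split; [|split => [v _|]]; rewrite ?inE //.
- move=> v vT; apply: divr_ge0 (ltW c_gt0); rewrite subr_ge0.
  by case: (boolP (v \in N)) => vN; rewrite ?mul1r ?mul0r ?d_ge0 ?(le_trans eps_m (mN v vN)).
move=> x s Hxs; rewrite perturb_length ler_pdivlMr // mul1r.
have /and5P[_ Us xT _ _] := Hxs.
have xN : x \notin N by apply: contraL xT; exact: NT.
rewrite /= (negbTE xN) add0n.
have cV : (count (mem N) s <= #|V|)%N.
  apply: leq_trans (count_size _ _) (ltnW _).
  by have := max_card (mem (x :: s)); rewrite (card_uniqP Us).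
have [c2 | c3] := leqP (count (mem N) s) 2.
  have Hc : (count (mem N) s)%:R * eps <= 2 * eps by rewrite ler_wpM2r // ler_nat.
  have := Hlen _ _ Hxs; lra.
have Hc : (count (mem N) s)%:R * eps <= m.
  by apply: le_trans epsV; rewrite mulrC ler_wpM2l // ler_nat.
have := Hlong _ _ Hxs c3; lra.
Qed.

End Perturbation.

Lemma lp_optimum_fix_zero (V : finType) (e : rel V) (T : {set V}) (d : V -> rat) LP w :
  lp_optimum e T set0 LP -> lp_feasible e T set0 d -> lp_obj T d = LP -> d w = 0 ->
  lp_optimum e T [set w] LP.
Proof.
move=> [_ Hopt] [d_ge0 [_ Hlen]] dLP dw0; split.
  by exists d; split => //; split => //; split => // v _; rewrite inE => /eqP ->.
by move=> d' [d'_ge0 [_ Hlen']]; apply: Hopt; split => //; split => // v _; rewrite inE.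
Qed.

(* Indeed the perturbation
   with eps = m / (|V| + 3), m = min of d on the boundary, is feasible, and its
   objective (LP - |N| eps) / (1 - 2 eps) cannot beat LP. *)
Lemma boundary_le_twice_LP (V : finType) (e : rel V) (T : {set V}) (d : V -> rat) LP :
  symmetric e -> lp_optimum e T set0 LP -> lp_feasible e T set0 d -> lp_obj T d = LP ->
  (forall v, v \in boundary e T -> 0 < d v) ->
  #|boundary e T|%:R <= 2 * LP.
Proof.
move=> Hsym [_ Hopt] Hd dLP d_gt0; set N := boundary e T.
have NT v : v \in N -> v \notin T by case/boundaryP.
pose m := \big[Num.min/1]_(v in N) d v.
have m_gt0 : 0 < m by apply/bigmin_gtP; split => //; exact: ltr01.
have m_le1 : m <= 1 by exact: bigmin_le_id.
have mN v : v \in N -> m <= d v by exact: bigmin_le_cond.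
pose n : rat := #|V|%:R; pose eps := m / (n + 3).
have n_ge0 : 0 <= n by exact: ler0n.
have eps_gt0 : 0 < eps by rewrite divr_gt0 // ltr_wpDl.
have epsE : eps * n + eps * 3 = m by rewrite -mulrDr divfK // gt_eqF // ltr_wpDl.
have epsn : 0 <= eps * n by rewrite mulr_ge0 // ltW.
have Hfeas : lp_feasible e T set0 (perturb N eps d).
  have [d_ge0 [_ Hlen]] := Hd.
  apply: (perturb_feasible NT Hd mN); rewrite -/n; try lra.
  by move=> x s; exact: long_boundary_path Hsym d_ge0 Hlen mN.
have := Hopt _ Hfeas; rewrite perturb_obj // dLP ler_pdivlMr ?subr_gt0; last lra.
move=> Hle; rewrite -(ler_pM2r eps_gt0); lra.
Qed.

Lemma optimal_pos_on_boundary (V : finType) (e : rel V) (T : {set V}) (d : V -> rat) LP :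
  symmetric e -> lp_optimum e T set0 LP -> lp_feasible e T set0 d -> lp_obj T d = LP ->
  (forall t w, t \in T -> w \notin T -> e t w ->
     forall x, lp_optimum e T [set w] x -> LP < x) ->
  forall v, v \in boundary e T -> 0 < d v.
Proof.
move=> Hsym HLP Hd dLP HR3 v /boundaryP[vT [t tT evt]].
have [d_ge0 _] := Hd; rewrite lt_def d_ge0 // andbT; apply/eqP => dv0.
have etv : e t v by rewrite Hsym.
by have := HR3 t v tT vT etv _ (lp_optimum_fix_zero HLP Hd dLP dv0); rewrite ltxx.
Qed.

Lemma connect_neighbour (V : finType) (e : rel V) (t t' : V) :
  t != t' -> connect e t t' -> exists w, e t w.
Proof.
move=> tt' /connectP[[|y p] /= Hp Hl]; first by rewrite Hl eqxx in tt'.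
by exists y; case/andP: Hp.
Qed.

(* Under (R1), (R2), (R5) every terminal has a neighbour, necessarily in the
   boundary, and no two terminals share one: hence |T| <= |boundary|. *)
Lemma card_terminals_le_boundary (V : finType) (e : rel V) (T : {set V}) :
  symmetric e ->
  (forall t1 t2, t1 \in T -> t2 \in T -> ~~ e t1 t2) ->
  (forall v t1 t2, v \notin T -> t1 \in T -> t2 \in T -> t1 != t2 ->
     e v t1 -> e v t2 -> False) ->
  (forall v, exists t1 t2, [/\ t1 \in T, t2 \in T, t1 != t2,
     connect e v t1 & connect e v t2]) ->
  (#|T| <= #|boundary e T|)%N.
Proof.
move=> Hsym HR1 HR2 HR5.
have nb t : exists w, e t w.
  have [t1 [t2 [_ _ t12 c1 c2]]] := HR5 t.
  case: (eqVneq t t1) => [Et | tt1]; last exact: connect_neighbour c1.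
  by apply: connect_neighbour c2; rewrite Et.
pose f t := odflt t [pick w | e t w].
have ef t : e t (f t) by rewrite /f; case: pickP => [//|/= none]; have [w] := nb t; rewrite none.
have fN t : t \in T -> f t \in boundary e T.
  move=> tT; apply/boundaryP; split; last by exists t; rewrite // Hsym.
  by apply/negP => /(HR1 t _ tT); rewrite ef.
have finj : {in T &, injective f}.
  move=> t1 t2 t1T t2T f12; case: (eqVneq t1 t2) => // t12; exfalso.
  have /boundaryP[f1T _] := fN t1 t1T.
  by apply: (HR2 _ _ _ f1T t1T t2T t12); rewrite Hsym ?ef // f12 ef.
rewrite -(card_in_imset finj); apply/subset_leq_card/subsetP => _ /imsetP[t tT ->].
exact: fN.
Qed.

Theorem mainTheorem7 (V : finType) (e : rel V) (T : {set V}) (k : int) (LP : rat)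
  (Hg : simple_graph e)
  (HLP : lp_optimum e T set0 LP)
  (* (R1) *)
  (HR1a : forall t1 t2, t1 \in T -> t2 \in T -> ~~ e t1 t2)
  (HR1b : 0 <= k%:~R - LP)
  (* (R2) *)
  (HR2 : forall v t1 t2, v \notin T -> t1 \in T -> t2 \in T -> t1 != t2 ->
           e v t1 -> e v t2 -> False)
  (* (R3) *)
  (HR3 : forall t w, t \in T -> w \notin T -> e t w ->
           forall x, lp_optimum e T [set w] x -> LP < x)
  (* (R5) *)
  (HR5 : forall v, exists t1 t2, [/\ t1 \in T, t2 \in T, t1 != t2,
           connect e v t1 & connect e v t2]) :
  (#|T|%:Z <= 2 * k)%R.
Proof.
have [Hsym _] := Hg.
have [[d [Hd dLP]] _] := HLP.
have d_gt0 := optimal_pos_on_boundary Hsym HLP Hd dLP HR3.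
have HN := boundary_le_twice_LP Hsym HLP Hd dLP d_gt0.
have HT := card_terminals_le_boundary Hsym HR1a HR2 HR5.
rewrite -(ler_int rat) intrM.
apply: le_trans (le_trans HN _); first by rewrite ler_nat.
by rewrite ler_pM2l // -subr_ge0.
Qed.
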